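(* Let $G=(V,E)$ be a finite, connected, undirected graph with $n\ge2$ vertices and let $0<r<1$. For any $\epsilon\in(0,1)$ and any $t\ge\frac{1}{1-r}n^3/\epsilon$, the Moran process on $G$ with fitness $r$ (started from a single mutant) reaches absorption within $t$ steps with probability at least $1-\epsilon$.
   Context: The Moran process on $G$ with mutant fitness $r>0$ is the Markov chain $(X_i)_{i\ge0}$ whose state $X_i\subseteq V$ is the set of vertices occupied by mutants; every other vertex is occupied by a non-mutant of fitness $1$. Write $W(S)=r|S|+|V\setminus S|$ for the total fitness. Given $X_i=S$, one step is: choose a vertex $x$ with probability $r/W(S)$ if $x\in S$ and $1/W(S)$ if $x\notin S$; then choose a neighbour $y$ of $x$ uniformly at random; set $X_{i+1}=S\cup\{y\}$ if $x\in S$ and $X_{i+1}=S\setminus\{y\}$ if $x\notin S$. The process starts from $X_0=\{x\}$ for a single vertex $x$. Absorption means reaching $X_i=\emptyset$ or $X_i=V$. *)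

From HB Require Import structures.
From mathcomp Require Import all_boot all_order all_algebra.
Set Implicit Arguments. Unset Strict Implicit. Unset Printing Implicit Defensive.
Import Order.TTheory GRing.Theory Num.Theory.
Local Open Scope ring_scope.

Section Moran.
Variables (R : realFieldType) (V : finType) (e : rel V) (r : R).

Definition fit (S : {set V}) (x : V) : R := if x \in S then r else 1.

Definition Wfit (S : {set V}) : R := \sum_(x : V) fit S x.

Definition deg (x : V) : nat := #|[set y | e x y]|.

(* result of x reproducing onto neighbour y *)
Definition moran_update (S : {set V}) (x y : V) : {set V} :=
  if x \in S then y |: S else S :\ y.

Definition moran_trans (S S' : {set V}) : R :=
  \sum_(x : V) \sum_(y : V | e x y)
     (fit S x / Wfit S) * (deg x)%:R^-1 * (moran_update S x y == S')%:R.

Definition absorbing (S : {set V}) : bool := (S == set0) || (S == setT).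

(* surv x0 t S = probability that the process started from {x0} has not
   been absorbed in any of the steps 0..t and X_t = S *)
Fixpoint surv (x0 : V) (t : nat) : {set V} -> R :=
  match t with
  | 0 => fun S => (S == [set x0])%:R * (~~ absorbing S)%:R
  | t'.+1 => fun S' =>
      (~~ absorbing S')%:R * \sum_(S : {set V}) surv x0 t' S * moran_trans S S'
  end.

Definition absorb_within (x0 : V) (t : nat) : R :=
  1 - \sum_(S : {set V}) surv x0 t S.

End Moran.

(* Weigh a mutant set S by the
   potential  phi S = \sum_(z in S) 1/deg z,  which lies in [0, 1] at the
   start X_0 = {x0}.  One step of the process changes phi by the rate-weighted
   flow across the cut (S, V \ S): mutant births add  r * flow S  and
   non-mutant births remove  flow S,  so the expected potential decreases by
   (1 - r) * flow S.  As long as S is not absorbing, connectivity gives an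
   edge across the cut, hence  flow S >= 1/n^3.  A general drift lemma for
   the killed (sub-stochastic) process  surv  then shows
     c * t * P(not absorbed by time t) <= phi {x0} <= 1,  c = (1 - r)/n^3,
   and the hypothesis on t turns this into  P(not absorbed) <= eps. *)

From HB Require Import structures.
From mathcomp Require Import all_boot all_order all_algebra.
From mathcomp Require Import ring lra.
Import Order.TTheory GRing.Theory Num.Theory.
Set Implicit Arguments. Unset Strict Implicit. Unset Printing Implicit Defensive.
Local Open Scope ring_scope.

Section MoranDrift.
Variables (R : realFieldType) (V : finType) (e : rel V).
Hypotheses (e_sym : symmetric e) (e_conn : forall x y : V, connect e x y)
  (hn : (2 <= #|V|)%N).
Variable r : R.
Hypotheses (hr0 : 0 < r) (hr1 : r < 1).

Local Notation d x := ((deg e x)%:R : R).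
Local Notation n := (#|V|%:R : R).

(* In a connected graph with at least two vertices every vertex has a
   neighbour, so the uniform choice of a neighbour is well defined. *)
Lemma deg_gt0 x : (0 < deg e x)%N.
Proof.
have [y y_neq_x] : exists y, y != x.
  apply/existsP; rewrite -negb_forall; apply/negP => /forallP all_x.
  have : (#|V| <= 1)%N.
    rewrite -(card1 x); apply: subset_leq_card; apply/subsetP => z _.
    by rewrite inE; apply: all_x.
  by case: #|V| hn => [|[|]].
have /connectP [[|z p] /= path_xy last_y] := e_conn x y.
  by rewrite last_y eqxx in y_neq_x.
by case/andP: path_xy => exz _; apply/card_gt0P; exists z; rewrite inE.
Qed.

Lemma d_gt0 x : 0 < d x. Proof. by rewrite ltr0n deg_gt0. Qed.

Lemma d_le_n x : d x <= n. Proof. by rewrite ler_nat /deg max_card. Qed.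

Lemma n_gt0 : 0 < n. Proof. by rewrite ltr0n (leq_trans _ hn). Qed.

Lemma sum_neighbours x (c : R) : \sum_(y | e x y) c = c * d x.
Proof.
rewrite (eq_bigl (fun y => y \in [set y | e x y])) => [|y]; last by rewrite inE.
by rewrite sumr_const mulr_natr.
Qed.

Lemma crossing_edge (S : {set V}) : ~~ absorbing S ->
  exists a b, [/\ a \in S, b \notin S & e a b].
Proof.
rewrite /absorbing negb_or => /andP [/set0Pn [a aS] S_neqT].
have [b bNS] : exists b, b \notin S.
  apply/existsP; rewrite -negb_forall; apply: contra S_neqT => /forallP allS.
  by apply/eqP/setP => z; rewrite inE allS.
have /connectP [p path_ab last_b] := e_conn a b.
elim: p a aS path_ab last_b => [|z p IHp] a aS /=.
  by move=> _ last_b; rewrite last_b aS in bNS.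
case/andP=> eaz path_zb last_b.
have [zS|zNS] := boolP (z \in S); first exact: IHp zS path_zb last_b.
by exists a, z.
Qed.

Lemma fit_gt0 (S : {set V}) x : 0 < fit r S x.
Proof. by rewrite /fit; case: (x \in S). Qed.

Lemma fit_le1 (S : {set V}) x : fit r S x <= 1.
Proof. by rewrite /fit; case: (x \in S) => //; apply: ltW. Qed.

Lemma Wfit_gt0 (S : {set V}) : 0 < Wfit r S.
Proof.
have [x _] : exists x : V, x \in V by apply/card_gt0P; rewrite (leq_trans _ hn).
rewrite /Wfit (bigD1 x) //=; apply: ltr_wpDr; last exact: fit_gt0.
by apply: sumr_ge0 => y _; rewrite ltW ?fit_gt0.
Qed.

Lemma Wfit_le_n (S : {set V}) : Wfit r S <= n.
Proof. by rewrite /Wfit -sum1_card natr_sum; apply: ler_sum => x _; apply: fit_le1. Qed.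

(* Probability that x is chosen to reproduce and then picks a fixed neighbour. *)
Definition step_prob (S : {set V}) x : R := fit r S x / Wfit r S * (d x)^-1.

Lemma moran_expect (S : {set V}) (f : {set V} -> R) :
  \sum_S' moran_trans e r S S' * f S' =
  \sum_x \sum_(y | e x y) step_prob S x * f (moran_update S x y).
Proof.
rewrite /moran_trans /step_prob.
under eq_bigr => S' _ do rewrite big_distrl /=; rewrite exchange_big /=.
apply: eq_bigr => x _.
under eq_bigr => S' _ do rewrite big_distrl /=; rewrite exchange_big /=.
apply: eq_bigr => y _.
rewrite (bigD1 (moran_update S x y)) // eqxx mulr1 big1 /= ?addr0 // => S' neqS'.
by rewrite eq_sym (negbTE neqS') mulr0 mul0r.
Qed.

Lemma step_prob_sum1 (S : {set V}) : \sum_x \sum_(y | e x y) step_prob S x = 1.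
Proof.
have step_x x : \sum_(y | e x y) step_prob S x = fit r S x / Wfit r S.
  by rewrite sum_neighbours /step_prob -mulrA mulVf ?mulr1 // lt0r_neq0 ?d_gt0.
under eq_bigr => x _ do rewrite step_x.
by rewrite -mulr_suml divff // lt0r_neq0 ?Wfit_gt0.
Qed.

Lemma moran_trans_ge0 (S S' : {set V}) : 0 <= moran_trans e r S S'.
Proof.
apply: sumr_ge0 => x _; apply: sumr_ge0 => y _.
by rewrite !mulr_ge0 ?ler0n ?invr_ge0 ?ler0n // ltW ?fit_gt0 ?Wfit_gt0.
Qed.

Lemma moran_trans_sum1 (S : {set V}) : \sum_S' moran_trans e r S S' = 1.
Proof.
under eq_bigr => S' _ do rewrite -[moran_trans _ _ _ _]mulr1.
rewrite (moran_expect S (fun=> 1)) -[RHS](step_prob_sum1 S).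
by apply: eq_bigr => x _; apply: eq_bigr => y _; rewrite mulr1.
Qed.

Definition phi (S : {set V}) : R := \sum_(z in S) (d z)^-1.

Lemma phi_ge0 S : 0 <= phi S.
Proof. by apply: sumr_ge0 => z _; rewrite invr_ge0 ltW ?d_gt0. Qed.

Lemma phi_set1_le1 x : phi [set x] <= 1.
Proof. by rewrite /phi big_set1 invf_le1 ?d_gt0 // ler1n deg_gt0. Qed.

Definition phi_change (S : {set V}) x y : R :=
  if x \in S then (y \notin S)%:R / d y else - ((y \in S)%:R / d y).

Lemma phi_update S x y : phi (moran_update S x y) = phi S + phi_change S x y.
Proof.
rewrite /moran_update /phi_change /phi; case: (x \in S); have [yS|yNS] := boolP (y \in S).
- by rewrite (setUidPr _) ?sub1set // mul0r addr0.
- by rewrite big_setU1 //= mul1r addrC.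
- by rewrite (big_setD1 y yS) /= mul1r addrAC subrr add0r.
- by rewrite (setDidPl _) ?mul0r ?oppr0 ?addr0 // disjoint_sym disjoints1.
Qed.

(* Rate at which the edge (x, y) pushes a mutant at x onto a non-mutant at y,
   per unit of fitness; flow S is its total over all edges. *)
Definition cross_rate (S : {set V}) x y : R :=
  (x \in S)%:R * (y \notin S)%:R / (Wfit r S * d x * d y).

Definition flow (S : {set V}) : R := \sum_x \sum_(y | e x y) cross_rate S x y.

Lemma cross_rate_ge0 S x y : 0 <= cross_rate S x y.
Proof. by rewrite divr_ge0 ?mulr_ge0 ?ler0n // ltW ?Wfit_gt0 ?d_gt0. Qed.

Lemma step_phi_change S x y :
  step_prob S x * phi_change S x y = r * cross_rate S x y - cross_rate S y x.
Proof.
have W_neq0 := lt0r_neq0 (Wfit_gt0 S).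
have dx_neq0 := lt0r_neq0 (d_gt0 x); have dy_neq0 := lt0r_neq0 (d_gt0 y).
rewrite /step_prob /cross_rate /phi_change /fit.
by case: (x \in S); case: (y \in S) => /=;
  rewrite ?mul0r ?mul1r ?mulr0 ?subr0 ?sub0r; field; rewrite ?dx_neq0 ?dy_neq0 ?W_neq0.
Qed.

(* By symmetry of e, the incoming and outgoing totals are both flow S. *)
Lemma flow_sym S : \sum_x \sum_(y | e x y) cross_rate S y x = flow S.
Proof.
rewrite /flow; under eq_bigr => x _ do rewrite big_mkcond /=.
rewrite exchange_big /=; under [RHS]eq_bigr => x _ do rewrite big_mkcond /=.
by apply: eq_bigr => x _; apply: eq_bigr => y _; rewrite e_sym.
Qed.

Lemma expected_phi (S : {set V}) :
  \sum_S' moran_trans e r S S' * phi S' = phi S - (1 - r) * flow S.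
Proof.
rewrite moran_expect.
under eq_bigr => x _ do under eq_bigr => y _ do
  rewrite phi_update mulrDr step_phi_change.
under eq_bigr => x _ do rewrite big_split /=; rewrite big_split /=.
have -> : \sum_x \sum_(y | e x y) step_prob S x * phi S = phi S.
  rewrite -[RHS]mul1r -(step_prob_sum1 S) mulr_suml.
  by apply: eq_bigr => x _; rewrite mulr_suml.
have -> : \sum_x \sum_(y | e x y) (r * cross_rate S x y - cross_rate S y x) =
          r * flow S - flow S.
  rewrite -{2}(flow_sym S) /flow mulr_sumr -sumrB.
  by apply: eq_bigr => x _; rewrite mulr_sumr sumrB.
by rewrite mulrBl mul1r opprB addrA.
Qed.

(* A crossing edge (a, b) alone contributes 1/(W d_a d_b) >= 1/n^3. *)
Lemma flow_lb (S : {set V}) : ~~ absorbing S -> (n ^+ 3)^-1 <= flow S.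
Proof.
move=> /crossing_edge [a [b [aS bNS eab]]].
have rate_ab : cross_rate S a b = (Wfit r S * d a * d b)^-1.
  by rewrite /cross_rate aS bNS mul1r div1r.
apply: le_trans (_ : cross_rate S a b <= _).
  rewrite rate_ab lef_pV2 ?posrE ?exprn_gt0 ?n_gt0 ?mulr_gt0 ?Wfit_gt0 ?d_gt0 //.
  rewrite !exprS expr0 mulr1 !mulrA.
  have W_ge0 := ltW (Wfit_gt0 S); have da_ge0 := ltW (d_gt0 a).
  apply: ler_pM; [exact: mulr_ge0 | exact: ltW (d_gt0 b) | | exact: d_le_n].
  by apply: ler_pM; [| | exact: Wfit_le_n | exact: d_le_n].
rewrite /flow (bigD1 a) //= (bigD1 b) //= -addrA lerDl.
rewrite addr_ge0 ?sumr_ge0 // => [y _|x _]; first exact: cross_rate_ge0.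
by apply: sumr_ge0 => y _; apply: cross_rate_ge0.
Qed.

Lemma phi_drift (S : {set V}) : ~~ absorbing S ->
  \sum_S' moran_trans e r S S' * phi S' <= phi S - (1 - r) / n ^+ 3.
Proof.
move=> /flow_lb flowS; rewrite expected_phi lerD2l lerN2.
by rewrite ler_wpM2l // subr_ge0 ltW.
Qed.

Lemma surv_ge0 x0 k S : 0 <= surv e r x0 k S.
Proof.
elim: k S => [|k IHk] S /=; first by rewrite mulr_ge0 ?ler0n.
rewrite mulr_ge0 ?ler0n //; apply: sumr_ge0 => S' _.
by rewrite mulr_ge0 ?IHk ?moran_trans_ge0.
Qed.

Lemma surv_absorbing x0 k S : absorbing S -> surv e r x0 k S = 0.
Proof. by case: k => [|k] /= ->; rewrite ?mulr0 ?mul0r. Qed.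

Lemma surv_drift x0 {f : {set V} -> R} {c : R} :
  (forall S, 0 <= f S) -> 0 <= c ->
  (forall S, ~~ absorbing S -> \sum_S' moran_trans e r S S' * f S' <= f S - c) ->
  forall k, \sum_S surv e r x0 k S * (f S + c * k%:R) <= f [set x0].
Proof.
move=> f_ge0 c_ge0 drift; elim=> [|k IHk].
  rewrite (bigD1 [set x0]) //= big1 => [|S /negbTE ->]; last by rewrite !mul0r.
  rewrite eqxx mul1r mulr0 !addr0.
  by case: (~~ absorbing _); rewrite ?mul1r ?mul0r ?f_ge0.
(* Step k -> k+1: drop the killing factor, then apply the drift from each S. *)
apply: le_trans IHk.
have weight_ge0 S' : 0 <= f S' + c * k.+1%:R by rewrite addr_ge0 ?mulr_ge0.
apply: (@le_trans _ _ (\sum_S' \sum_S surv e r x0 k S * moran_trans e r S S' *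
    (f S' + c * k.+1%:R))).
  apply: ler_sum => S' _ /=; rewrite -big_distrl /=.
  case: (~~ absorbing S'); rewrite ?mul1r // !mul0r mulr_ge0 //.
  by apply: sumr_ge0 => S _; rewrite mulr_ge0 ?surv_ge0 ?moran_trans_ge0.
rewrite exchange_big /=; apply: ler_sum => S _.
have [absS|nabsS] := boolP (absorbing S).
  by rewrite surv_absorbing // mul0r big1 // => S' _; rewrite !mul0r.
under eq_bigr => S' _ do rewrite -mulrA.
rewrite -big_distrr /= ler_wpM2l ?surv_ge0 //.
under eq_bigr => S' _ do rewrite mulrDr.
rewrite big_split /= -big_distrl /= moran_trans_sum1 mul1r.
have := drift S nabsS; rewrite -natr1 mulrDr mulr1; lra.
Qed.

Lemma survival_bound x0 k :
  (1 - r) / n ^+ 3 * k%:R * \sum_S surv e r x0 k S <= 1.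
Proof.
have c_ge0 : 0 <= (1 - r) / n ^+ 3.
  by rewrite divr_ge0 ?subr_ge0 ?ltW ?exprn_gt0 ?n_gt0.
apply: (le_trans _ (phi_set1_le1 x0)).
apply: (le_trans _ (surv_drift x0 phi_ge0 c_ge0 phi_drift k)).
rewrite mulr_sumr; apply: ler_sum => S _.
by rewrite mulrC ler_wpM2l ?surv_ge0 // lerDr phi_ge0.
Qed.

End MoranDrift.

Theorem corollary6 (R : realFieldType) (V : finType) (e : rel V)
  (e_sym : symmetric e) (e_irr : irreflexive e)
  (e_conn : forall x y : V, connect e x y)
  (hn : (2 <= #|V|)%N)
  (r : R) (hr0 : 0 < r) (hr1 : r < 1)
  (eps : R) (he0 : 0 < eps) (he1 : eps < 1)
  (t : nat) (ht : (#|V| ^ 3)%:R / ((1 - r) * eps) <= t%:R :> R)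
  (x0 : V) :
  1 - eps <= absorb_within e r x0 t.
Proof.
set s := \sum_S surv e r x0 t S.
set n3 := #|V|%:R ^+ 3 : R.
have n3_gt0 : 0 < n3 by rewrite exprn_gt0 // ltr0n (leq_trans _ hn).
have surv_bound : (1 - r) / n3 * t%:R * s <= 1 :=
  survival_bound e_sym e_conn hn hr0 hr1 x0 t.
(* multiplying out: (1 - r) t s <= n^3 <= (1 - r) t eps *)
have surv_le : (1 - r) * t%:R * s <= n3.
  have -> : (1 - r) * t%:R * s = (1 - r) / n3 * t%:R * s * n3.
    by field; rewrite lt0r_neq0.
  by rewrite -[leRHS]mul1r ler_wpM2r // ltW.
have eps_ge : n3 <= (1 - r) * t%:R * eps.
  move: ht; rewrite natrX ler_pdivrMr ?mulr_gt0 ?subr_gt0 //.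
  by rewrite mulrCA mulrA.
have rt_gt0 : 0 < (1 - r) * t%:R.
  by rewrite -(pmulr_lgt0 _ he0) (lt_le_trans n3_gt0 eps_ge).
rewrite /absorb_within -/s lerD2l lerN2 -(ler_pM2l rt_gt0).
exact: le_trans surv_le eps_ge.
Qed.
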